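(* Let $G$ be a graph with vertices $a,b,c,\alpha,\beta,\gamma$. Suppose there is perfect state transfer between $e_a-e_b$ and $e_\alpha-e_\beta$ at time $\tau$ in $G$, and there is also perfect state transfer between $e_b-e_c$ and $e_\beta-e_\gamma$ at the same time $\tau$ in $G$. Then there is perfect state transfer between $e_a-e_c$ and $e_\alpha-e_\gamma$ at time $\tau$ in $G$.
   Context: For a graph $G$ with Laplacian $L=\Delta-A$ ($\Delta$ degree matrix, $A$ adjacency matrix), $U(t)=\exp(itL)$. Perfect state transfer between $e_x-e_y$ and $e_z-e_w$ at time $\tau$ means $U(\tau)(e_x-e_y)=\lambda(e_z-e_w)$ for some $\lambda\in\mathbb{C}$ with $|\lambda|=1$; here $e_v$ is the standard basis vector of vertex $v$. *)

From HB Require Import structures.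
From mathcomp Require Import all_boot all_order all_algebra.
From mathcomp Require Import complex.
From mathcomp Require Import all_classical all_reals all_analysis.
Set Implicit Arguments. Unset Strict Implicit. Unset Printing Implicit Defensive.
Import Order.TTheory GRing.Theory Num.Theory ComplexField.
Import numFieldNormedType.Exports.
Local Open Scope ring_scope.

Definition simple_graph (n : nat) (adj : rel 'I_n) : Prop :=
  symmetric adj /\ irreflexive adj.

Definition degree_mx (R : realType) (n : nat) (adj : rel 'I_n) : 'M[R[i]]_n :=
  \matrix_(x, y) (if x == y then (#|[set z | adj x z]|)%:R else 0).
Definition adjacency_mx (R : realType) (n : nat) (adj : rel 'I_n) : 'M[R[i]]_n :=
  \matrix_(x, y) (if adj x y then 1 else 0).
Definition laplacian (R : realType) (n : nat) (adj : rel 'I_n) : 'M[R[i]]_n :=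
  degree_mx R adj - adjacency_mx R adj.

Definition expmx (R : realType) (n : nat) (A : 'M[R[i]]_n) : 'M[R[i]]_n :=
  limn (series (fun k : nat => (k`!%:R)^-1 *: A ^+ k)).

Definition transition (R : realType) (n : nat) (adj : rel 'I_n) (t : R) : 'M[R[i]]_n :=
  expmx ((('i%C : R[i]) * (t%:C)%C) *: laplacian R adj).

Definition ev (R : realType) (n : nat) (v : 'I_n) : 'cV[R[i]]_n := delta_mx v 0.

Definition pst (R : realType) (n : nat) (adj : rel 'I_n) (x y z w : 'I_n) (tau : R) : Prop :=
  exists lambda : R[i], `|lambda| = 1 /\
    transition adj tau *m (ev R x - ev R y) = lambda *: (ev R z - ev R w).

From HB Require Import structures.
From mathcomp Require Import all_boot all_order all_algebra.
From mathcomp Require Import complex.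
From mathcomp Require Import all_classical all_reals all_analysis.
From mathcomp Require Import sesquilinear spectral ring.
Set Implicit Arguments. Unset Strict Implicit. Unset Printing Implicit Defensive.
Import Order.TTheory GRing.Theory Num.Theory ComplexField.
Import numFieldNormedType.Exports Num.Def.
Local Open Scope classical_set_scope.
Local Open Scope complex_scope.
Local Open Scope ring_scope.
Local Open Scope sesquilinear_scope.

(** The Laplacian of a simple graph is real symmetric, hence unitarily
  diagonalisable with real eigenvalues, so [U(t) = exp(itL)] is unitary.
  Unitarity makes [U(t)] injective, which settles the degenerate cases
  [a = b] and [b = c].  Otherwise write [U(e_a - e_b) = l1 (e_alpha - e_beta)]
  and [U(e_b - e_c) = l2 (e_beta - e_gamma)]: unitarity equates the inner
  product [-(1 + [a = c])] of [e_a - e_b] and [e_b - e_c] with [conj(l1) l2]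
  times [-(1 + [alpha = gamma])]; comparing moduli gives [conj(l1) l2 = 1],
  i.e. [l1 = l2], and adding the two transfers gives
  [U(e_a - e_c) = l1 (e_alpha - e_gamma)]. *)

(* The library gives [R[i]] no topology; take the one of its norm. *)
HB.instance Definition _ (R : realType) := NormedModule.copy R[i] (R[i])^o.

Section exp_i_real.
Variable R : realType.

Lemma cvg_real_complex (u : nat -> R) (l : R) : u k @[k --> \oo] --> l ->
  (u k)%:C @[k --> \oo] --> (l%:C : R[i]).
Proof.
move=> /cvgrPdist_lt u_l; apply/cvgrPdist_lt => e e_gt0.
have Ree_gt0 : 0 < complex.Re e by move: e_gt0; rewrite ltcE => /andP[].
have Ime0 : complex.Im e = 0 by move: e_gt0; rewrite ltcE => /andP[/eqP ->].
apply: filterS (u_l _ Ree_gt0) => k ltk.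
by rewrite -rmorphB normc_def /= expr0n /= addr0 sqrtr_sqr ltcE /= Ime0 eqxx.
Qed.

Lemma expr_i k : ('i ^+ k : R[i]) =
  ((~~ odd k)%:R * (-1) ^+ k./2)%:C + 'i * ((odd k)%:R * (-1) ^+ k.-1./2)%:C.
Proof.
move: (k./2) (odd k) (odd_double_half k) => m [] <- /=.
  rewrite add1n /= add0n doubleK exprS -mul2n exprM sqr_i.
  by rewrite !rmorphM /= !rmorphXn /= rmorphN1 /= mul0r add0r mul1r.
rewrite add0n -mul2n exprM sqr_i.
by rewrite !rmorphM /= !rmorphXn /= rmorphN1 /= mul0r mulr0 addr0 mul1r.
Qed.

Lemma exp_coeff_i (th : R) k :
  (k`!%:R)^-1 * ('i * th%:C) ^+ k =
  (cos_coeff th k)%:C + 'i * (sin_coeff th k)%:C :> R[i].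
Proof.
rewrite /cos_coeff /sin_coeff exprMn expr_i.
rewrite !rmorphM /= !rmorphXn /= fmorphV /= !rmorph_nat /=; ring.
Qed.

Lemma cvg_exp_series_i (th : R) :
  series (fun k => (k`!%:R)^-1 * ('i * th%:C) ^+ k : R[i]) N @[N --> \oo] -->
  (cos th)%:C + 'i * (sin th)%:C.
Proof.
have -> : series (fun k => (k`!%:R)^-1 * ('i * th%:C) ^+ k : R[i]) =
    (fun N => (series (cos_coeff th) N)%:C + 'i * (series (sin_coeff th) N)%:C).
  apply/funext => N; rewrite /series /= (eq_bigr _ (fun k _ => exp_coeff_i th k)).
  by rewrite big_split /= -mulr_sumr !rmorph_sum.
apply: cvgD; first apply: cvg_real_complex.
  by have := @is_cvg_series_cos_coeff R th; rewrite unlock.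
apply: cvgMl_tmp; apply: cvg_real_complex.
by have := @is_cvg_series_sin_coeff R th; rewrite unlock.
Qed.

Lemma norm_cos_add_i_sin (th : R) : `|(cos th)%:C + 'i * (sin th)%:C| = 1 :> R[i].
Proof. by rewrite normc_def /= !mul0r !mul1r !subr0 !addr0 !add0r cos2Dsin2 sqrtr1. Qed.

End exp_i_real.

Section conj_diag.
Variables (R : realType) (n : nat).
Implicit Types (P : 'M[R[i]]_n) (d : 'rV[R[i]]_n).

Definition conj_diag P d := invmx P *m diag_mx d *m P.

Lemma conj_diag_sum P d :
  conj_diag P d = \sum_j d 0 j *: (invmx P *m delta_mx j j *m P).
Proof.
rewrite /conj_diag diag_mx_sum_delta mulmx_sumr mulmx_suml; apply: eq_bigr => j _.
by rewrite -scalemxAr -scalemxAl.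
Qed.

Lemma scale_conj_diag P d (c : R[i]) :
  c *: conj_diag P d = conj_diag P (\row_j (c * d 0 j)).
Proof.
by rewrite !conj_diag_sum scaler_sumr; apply: eq_bigr => j _; rewrite scalerA mxE.
Qed.

Lemma conj_diagX P d k : P \in unitmx ->
  conj_diag P d ^+ k = conj_diag P (\row_j d 0 j ^+ k).
Proof.
move=> P_unit; elim: k => [|k IHk].
  rewrite expr0 /conj_diag.
  have -> : \row_j d 0 j ^+ 0 = const_mx 1 by apply/rowP => j; rewrite !mxE.
  by rewrite diag_const_mx mulmx1 mulVmx.
rewrite exprSr -mulmxE IHk /conj_diag !mulmxA mulmxK //.
rewrite -[invmx P *m _ *m _]mulmxA mulmx_diag; congr (_ *m diag_mx _ *m _).
by apply/rowP => j; rewrite !mxE exprSr.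
Qed.

Lemma expmx_conj_diag P d (e : 'I_n -> R[i]) : P \in unitmx ->
  (forall j, series (fun k => (k`!%:R)^-1 * d 0 j ^+ k) N @[N --> \oo] --> e j) ->
  expmx (conj_diag P d) = conj_diag P (\row_j e j).
Proof.
move=> P_unit d_e; rewrite /expmx.
have -> : series (fun k => (k`!%:R)^-1 *: conj_diag P d ^+ k) =
    (fun N => \sum_j series (fun k => (k`!%:R)^-1 * d 0 j ^+ k) N *:
       (invmx P *m delta_mx j j *m P)).
  apply/funext => N; rewrite /series /=.
  under eq_bigr => k _ do rewrite conj_diagX // scale_conj_diag conj_diag_sum.
  rewrite exchange_big /=; apply: eq_bigr => j _.
  by rewrite scaler_suml; apply: eq_bigr => k _; rewrite !mxE.
apply: cvg_lim; first exact: norm_hausdorff.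
rewrite conj_diag_sum.
under [X in _ --> X]eq_bigr => j _ do rewrite mxE.
apply: cvg_big => //; first exact: add_continuous.
by move=> j _; apply: cvgZr_tmp; exact: d_e.
Qed.

Lemma unitary_conj_diag P d : P \is unitarymx ->
  (forall j, `|d 0 j| = 1) -> conj_diag P d \is unitarymx.
Proof.
move=> P_unitary d_norm; rewrite /conj_diag invmx_unitary //.
rewrite mul_unitarymx ?mul_unitarymx ?trmxC_unitary //.
apply/unitarymxP; rewrite tr_diag_mx map_diag_mx mulmx_diag.
have -> : \row_j (d 0 j * (map_mx conjC d) 0 j) = const_mx 1.
  by apply/rowP => j; rewrite !mxE -normCK d_norm expr1n.
by rewrite diag_const_mx.
Qed.

End conj_diag.

Lemma laplacian_hermsym (R : realType) (n : nat) (adj : rel 'I_n) :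
  symmetric adj -> laplacian R adj \is hermsymmx.
Proof.
move=> adj_sym; apply/is_hermitianmxP; rewrite expr0 scale1r.
apply/matrixP => x y; rewrite !mxE adj_sym eq_sym.
case: eqP => [->|_] /=; case: ifP => _;
  by rewrite ?rmorphB /= ?conjC_nat ?conjC0 ?conjC1.
Qed.

Lemma transition_unitary (R : realType) (n : nat) (adj : rel 'I_n) (t : R) :
  symmetric adj -> transition adj t \is unitarymx.
Proof.
move=> adj_sym; have L_herm := laplacian_hermsym R adj_sym.
have /orthomx_spectralP L_diag := hermitian_normalmx L_herm.
set P := spectralmx _ in L_diag; set d := spectral_diag _ in L_diag.
have d_real j : d 0 j = (complex.Re (d 0 j))%:C.
  by rewrite RRe_real //; move/mxOverP: (hermitian_spectral_diag_real L_herm); apply.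
pose th j := t * complex.Re (d 0 j).
rewrite /transition L_diag -/(conj_diag P d) scale_conj_diag.
rewrite (@expmx_conj_diag _ _ _ _ (fun j => (cos (th j))%:C + 'i * (sin (th j))%:C)).
- apply: unitary_conj_diag; first exact: spectral_unitarymx.
  by move=> j; rewrite mxE; exact: norm_cos_add_i_sin.
- exact: spectral_unit.
by move=> j; rewrite mxE d_real -mulrA -rmorphM; exact: cvg_exp_series_i.
Qed.

Section unitary_transfer.
Variables (R : realType) (n : nat).
Implicit Types (U : 'M[R[i]]_n) (u v : 'cV[R[i]]_n).

Definition cdot u v : R[i] := (u^t* *m v) 0 0.

Lemma cdot_unitary U u v : U \is unitarymx -> cdot (U *m u) (U *m v) = cdot u v.
Proof.
rewrite -trmxC_unitary => /unitarymxP U_unitary.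
by rewrite /cdot trmx_mul map_mxM -mulmxA (mulmxA _ U) -{2}(trmxCK U) U_unitary mul1mx.
Qed.

Lemma cdotZ (a b : R[i]) u v : cdot (a *: u) (b *: v) = a^* * b * cdot u v.
Proof.
rewrite /cdot -scalemxAr [(a *: u)^T]linearZ /= map_mxZ -scalemxAl !mxE.
by rewrite mulrCA mulrA.
Qed.

Lemma cdot_ev (x y : 'I_n) : cdot (ev R x) (ev R y) = (x == y)%:R.
Proof.
rewrite /cdot /ev trmx_delta map_delta_mx mul_delta_mx_cond.
by case: (x == y); rewrite ?mulr1n ?mulr0n !mxE.
Qed.

Lemma cdotBl u v w : cdot (u - v) w = cdot u w - cdot v w.
Proof.
by rewrite /cdot [(u - v)^T]linearB /= map_mxB mulmxBl [LHS]mxE [X in _ + X = _]mxE.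
Qed.

Lemma cdotBr u v w : cdot u (v - w) = cdot u v - cdot u w.
Proof. by rewrite /cdot mulmxBr [LHS]mxE [X in _ + X = _]mxE. Qed.

Lemma cdot_ev_sub (x y z w : 'I_n) :
  cdot (ev R x - ev R y) (ev R z - ev R w) =
  (x == z)%:R - (x == w)%:R - ((y == z)%:R - (y == w)%:R).
Proof. by rewrite cdotBl !cdotBr !cdot_ev. Qed.

Lemma ev_sub_eq0 (x y : 'I_n) : (ev R x - ev R y == 0) = (x == y).
Proof.
rewrite subr_eq0; apply/eqP/eqP => [/matrixP/(_ x 0)|-> //].
by rewrite !mxE !eqxx /=; case: eqP => // _ /eqP; rewrite oner_eq0.
Qed.

Lemma unit_mulmx_eq0 U u : U \in unitmx -> (U *m u == 0) = (u == 0).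
Proof.
move=> U_unit; apply/eqP/eqP => [Uu0|->]; last by rewrite mulmx0.
by rewrite -(mulKmx U_unit u) Uu0 mulmx0.
Qed.

Definition transfer U u v := exists l : R[i], `|l| = 1 /\ U *m u = l *: v.

Lemma nat_phase_eq1 (p q : nat) (mu : R[i]) : `|mu| = 1 ->
  p.+1%:R = mu * q.+1%:R -> mu = 1.
Proof.
move=> mu_norm pq; have p_q : p.+1 = q.+1.
  move/(congr1 normr)/eqP: pq.
  by rewrite normrM mu_norm mul1r !normr_nat eqr_nat => /eqP.
by move: pq; rewrite p_q -{1}[_%:R]mul1r => /mulIf ->; rewrite ?pnatr_eq0.
Qed.

Variable U : 'M[R[i]]_n.
Hypothesis U_unitary : U \is unitarymx.

Lemma transfer_eq_ends (x y z w : 'I_n) (l : R[i]) : `|l| = 1 ->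
  U *m (ev R x - ev R y) = l *: (ev R z - ev R w) -> (x == y) = (z == w).
Proof.
move=> l_norm Uxy; have l_neq0 : l != 0 by rewrite -normr_eq0 l_norm oner_eq0.
have U_unit : U \in unitmx by apply: unitarymx_unit.
by rewrite -!ev_sub_eq0 -(unit_mulmx_eq0 _ U_unit) Uxy scaler_eq0 (negPf l_neq0).
Qed.

Lemma transfer_phase_eq (a b c alpha beta gamma : 'I_n) (l1 l2 : R[i]) :
  a != b -> b != c -> `|l1| = 1 -> `|l2| = 1 ->
  U *m (ev R a - ev R b) = l1 *: (ev R alpha - ev R beta) ->
  U *m (ev R b - ev R c) = l2 *: (ev R beta - ev R gamma) -> l2 = l1.
Proof.
move=> a_b b_c l1_norm l2_norm Uab Ubc.
have alpha_beta : alpha != beta by rewrite -(transfer_eq_ends l1_norm Uab).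
have beta_gamma : beta != gamma by rewrite -(transfer_eq_ends l2_norm Ubc).
have ends_dot (x y z : 'I_n) : x != y -> y != z ->
    cdot (ev R x - ev R y) (ev R y - ev R z) = - (x == z).+1%:R.
  move=> x_y y_z; rewrite cdot_ev_sub eqxx (negPf x_y) (negPf y_z).
  by rewrite sub0r subr0 -opprD natr1.
have := cdot_unitary (ev R a - ev R b) (ev R b - ev R c) U_unitary.
rewrite Uab Ubc cdotZ !ends_dot // mulrN => /oppr_inj/esym.
move=> /nat_phase_eq1; rewrite normrM norm_conjC l1_norm l2_norm mulr1 => /(_ erefl).
have l1_conj : l1 * l1^* = 1 by rewrite -normCK l1_norm expr1n.
by move=> phase; rewrite -[l2]mul1r -l1_conj -mulrA phase mulr1.
Qed.

Lemma unitary_transfer_trans (a b c alpha beta gamma : 'I_n) :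
  transfer U (ev R a - ev R b) (ev R alpha - ev R beta) ->
  transfer U (ev R b - ev R c) (ev R beta - ev R gamma) ->
  transfer U (ev R a - ev R c) (ev R alpha - ev R gamma).
Proof.
move=> [l1 [l1_norm Uab]] [l2 [l2_norm Ubc]].
have [a_b|a_b] := eqVneq a b.
  have alpha_beta : alpha = beta.
    by apply/eqP; rewrite -(transfer_eq_ends l1_norm Uab) a_b.
  by rewrite a_b alpha_beta; exists l2.
have [b_c|b_c] := eqVneq b c.
  have beta_gamma : beta = gamma.
    by apply/eqP; rewrite -(transfer_eq_ends l2_norm Ubc) b_c.
  by rewrite -b_c -beta_gamma; exists l1.
exists l1; split => //.
have -> : ev R a - ev R c = (ev R a - ev R b) + (ev R b - ev R c).
  by rewrite addrA subrK.
rewrite mulmxDr Uab Ubc (transfer_phase_eq a_b b_c l1_norm l2_norm Uab Ubc).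
by rewrite -scalerDr addrA subrK.
Qed.

End unitary_transfer.

Theorem mainTheorem4 (R : realType) (n : nat) (adj : rel 'I_n)
    (a b c alpha beta gamma : 'I_n) (tau : R) :
  simple_graph adj ->
  pst adj a b alpha beta tau ->
  pst adj b c beta gamma tau ->
  pst adj a c alpha gamma tau.
Proof.
move=> [adj_sym _].
exact: (unitary_transfer_trans (transition_unitary tau adj_sym)).
Qed.
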